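(* Let $p<q$ be coprime positive integers, $m$ a positive integer, $j\in\{3,4\}$ and $R=\mathbb C[X_0,X_1,X_j]$. Define $\mu:\mathbb Z^3\to\mathbb Z^3$, $\mu(d_0,d_1,d_j)=(d_0-pd_1+qd_j,\;d_1-d_j,\;pd_1-qd_j)$ (injective), $\Lambda=\mu(\mathbb Z_{\ge0}^3)$, and for $\lambda\in\Lambda$ let $f_\lambda=X_0^{d_0}X_1^{d_1}X_j^{d_j}$ where $\mu(d_0,d_1,d_j)=\lambda$. For $(n,c)$ with $(n,c,\omega)\in\Lambda$ for some $\omega$, let $\omega_{(n,c)}=\min\{\omega:(n,c,\omega)\in\Lambda\}$. For $(n,d)\in\mathbb Z\times\mathbb Z/m\mathbb Z$ let $\Lambda_{(n,d)}=\{(n,c,\omega)\in\Lambda: c\equiv d\pmod m\}$ and $c_{(n,d)}=\min\{c\in\mathbb Z:c\equiv d\pmod m,\ (n,c,\omega)\in\Lambda\text{ for some }\omega\}$. Let $\lambda=(n,c,\omega)\in\Lambda_{(n,d)}$. Then: (i) $f_\lambda\in(X_0^{q-p})$ if and only if $\omega>\omega_{(n,c)}$; (ii) if $m=a(q-p)$ for a positive integer $a$, $\omega=\omega_{(n,c)}$ and $c>c_{(n,d)}$, then $f_\lambda\in(X_1^{aq}X_j^{ap})$.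
   Context: Ideals are taken in $R$. The minima $\omega_{(n,c)}$ and $c_{(n,d)}$ exist (the defining sets are nonempty and bounded below). *)

From mathcomp Require Import all_boot all_algebra.
From mathcomp Require Import Rstruct complex.
From mathcomp Require Import mpoly.
Set Implicit Arguments. Unset Strict Implicit. Unset Printing Implicit Defensive.
Import GRing.Theory Num.Theory.
Local Open Scope ring_scope.

Definition CC : Type := (Rdefinitions.R)[i].

Definition Rpoly : Type := {mpoly CC[3]}.
Definition X0 : Rpoly := 'X_(0 : 'I_3).
Definition X1 : Rpoly := 'X_(1 : 'I_3).
Definition Xj : Rpoly := 'X_(2 : 'I_3).

Definition in_principal_ideal (g f : Rpoly) : Prop := exists h : Rpoly, f = h * g.

Definition mu (p q : int) (d0 d1 dj : int) : int * int * int :=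
  (d0 - p * d1 + q * dj, d1 - dj, p * d1 - q * dj).

Definition inLambda (p q : nat) (l : int * int * int) : Prop :=
  exists d0 d1 dj : nat, mu p%:Z q%:Z d0%:Z d1%:Z dj%:Z = l.

Definition fmon (d0 d1 dj : nat) : Rpoly := X0 ^+ d0 * X1 ^+ d1 * Xj ^+ dj.

Definition is_omega_min (p q : nat) (n c w : int) : Prop :=
  inLambda p q (n, c, w) /\ forall w', inLambda p q (n, c, w') -> w <= w'.

Definition is_c_min (p q m : nat) (n d c0 : int) : Prop :=
  ((c0 == d %[mod m%:Z])%Z /\ exists w, inLambda p q (n, c0, w)) /\
  forall c', (c' == d %[mod m%:Z])%Z -> (exists w, inLambda p q (n, c', w)) -> c0 <= c'.

From mathcomp Require Import all_boot all_order all_algebra.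
From mathcomp Require Import Rstruct complex.
From mathcomp Require Import mpoly.
From mathcomp Require Import zify ring.
Import Order.TTheory GRing.Theory Num.Theory.
Local Open Scope ring_scope.

(* Write r = q - p.  Inverting mu gives d0 = n + w and w = p c - r dj, so the
   points of Lambda over a fixed (n, c) form the chain obtained by moving the
   exponent along (-r, 1, 1), which lowers w by r; the chain stops exactly
   when d0 < r.  Hence w is not minimal iff X_0^r divides f_lambda, which is
   (i).  For (ii), a second point over (n, c0) with c0 + a r <= c forces
   r (dj - ej) = p (c - c0) + e0 - d0 > r (p a - 1), so dj >= p a, and then
   d1 = c + dj exceeds e1 by at least a r + p a = a q. *)

Lemma mulz_lt_step {r x y : int} : 0 < r -> x < y -> r * x + r <= r * y.
Proof.
by move=> r_gt0 lt_xy; rewrite -[r in _ + r]mulr1 -mulrDr ler_pM2l //; lia.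
Qed.

Lemma eqz_mod_lt_add_le (m c0 c : int) :
  0 < m -> c0 < c -> (c == c0 %[mod m])%Z -> c0 + m <= c.
Proof.
move=> m_gt0 lt_c0c; rewrite eqz_mod_dvd => /dvdzP [k Ek].
have k_gt0 : 0 < k by rewrite -(pmulr_lgt0 _ m_gt0) -Ek; lia.
by have := mulz_lt_step m_gt0 k_gt0; rewrite mulr0 add0r mulrC -Ek; lia.
Qed.

Lemma mu_exponents {p q d0 d1 dj n c w : int} : mu p q d0 d1 dj = (n, c, w) ->
  [/\ d0 = n + w, d1 = c + dj & w = p * c - (q - p) * dj].
Proof. by rewrite /mu => -[<- <- <-]; split; ring. Qed.

Lemma mu_shift {p q d0 d1 dj n c w : int} (k : int) :
  mu p q d0 d1 dj = (n, c, w) ->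
  mu p q (d0 - (q - p) * k) (d1 + k) (dj + k) = (n, c, w - (q - p) * k).
Proof. by rewrite /mu => -[<- <- <-]; congr (_, _, _); ring. Qed.

Section Fibres.
Context {p q : nat}.
Hypothesis lt_pq : (p < q)%N.

Lemma omega_min_lt_iff {n c w wmin : int} {d0 d1 dj : nat} :
  mu p q d0 d1 dj = (n, c, w) -> is_omega_min p q n c wmin ->
  (wmin < w <-> (q - p <= d0)%N).
Proof.
move=> Ed [[e0 [e1 [ej Ee]]] wmin_min].
have [d0E _ wE] := mu_exponents Ed; have [e0E _ wminE] := mu_exponents Ee.
have r_gt0 : 0 < q%:Z - p%:Z by lia.
split=> [lt_wmin | le_d0].
- have lt_dj : dj%:Z < ej%:Z by rewrite -(ltr_pM2l r_gt0); lia.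
  by have := mulz_lt_step r_gt0 lt_dj; lia.
- have Eshift := mu_shift 1 Ed; rewrite mulr1 in Eshift.
  have shifted : inLambda p q (n, c, w - (q%:Z - p%:Z)).
    by exists (d0 - (q - p))%N, d1.+1, dj.+1; rewrite -Eshift; congr mu; lia.
  by have := wmin_min _ shifted; lia.
Qed.

Lemma exponents_ge_of_c_gap {a : nat} {n c c0 w w0 : int}
    {d0 d1 dj e0 e1 ej : nat} :
  (d0 < q - p)%N ->
  mu p q d0 d1 dj = (n, c, w) -> mu p q e0 e1 ej = (n, c0, w0) ->
  c0 + (a * (q - p))%N%:Z <= c -> (a * q <= d1)%N /\ (a * p <= dj)%N.
Proof.
move=> lt_d0 Ed Ee gap.
have [d0E d1E wE] := mu_exponents Ed; have [e0E e1E w0E] := mu_exponents Ee.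
set r := q%:Z - p%:Z; have r_gt0 : 0 < r by rewrite /r; lia.
have dj_eq : r * (dj%:Z - ej%:Z) = p%:Z * (c - c0) + e0%:Z - d0%:Z.
  by rewrite mulrBr /r; lia.
have p_gap : p%:Z * (a%:Z * r) <= p%:Z * (c - c0).
  by rewrite ler_wpM2l //; rewrite /r; lia.
have lt_dj : p%:Z * a%:Z - 1 < dj%:Z - ej%:Z.
  by rewrite -(ltr_pM2l r_gt0) mulrBr mulr1 dj_eq; move: p_gap; rewrite /r; nia.
split; nia.
Qed.

End Fibres.

Lemma fmonD a0 a1 aj b0 b1 bj :
  fmon (a0 + b0) (a1 + b1) (aj + bj) = fmon a0 a1 aj * fmon b0 b1 bj.
Proof. by rewrite /fmon !exprD; ring. Qed.

Lemma fmon_X0 k : fmon k 0 0 = X0 ^+ k.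
Proof. by rewrite /fmon !expr0 !mulr1. Qed.

Lemma fmon_X1Xj k l : fmon 0 k l = X1 ^+ k * Xj ^+ l.
Proof. by rewrite /fmon expr0 mul1r. Qed.

Lemma fmon_ideal_le e0 e1 ej d0 d1 dj :
  (e0 <= d0)%N -> (e1 <= d1)%N -> (ej <= dj)%N ->
  in_principal_ideal (fmon e0 e1 ej) (fmon d0 d1 dj).
Proof.
move=> /subnK <- /subnK <- /subnK <-.
by exists (fmon (d0 - e0) (d1 - e1) (dj - ej)); exact: fmonD.
Qed.

Definition eval_X0 : {rmorphism Rpoly -> {poly CC}} :=
  mmap (@polyC CC) (fun i : 'I_3 => if i == 0 then 'X else 1).

Lemma eval_X0_X i : eval_X0 'X_i = if i == 0 then 'X else 1.
Proof. by rewrite /= mmapX mmap1U. Qed.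

Lemma eval_X0_fmon d0 d1 dj : eval_X0 (fmon d0 d1 dj) = 'X^d0.
Proof. by rewrite /fmon !rmorphM !rmorphXn !eval_X0_X /= !expr1n !mulr1. Qed.

Lemma fmon_X0_ideal k d0 d1 dj :
  in_principal_ideal (X0 ^+ k) (fmon d0 d1 dj) <-> (k <= d0)%N.
Proof.
rewrite -fmon_X0; split=> [[h /(congr1 eval_X0)] | le_kd0]; last first.
  exact: fmon_ideal_le.
rewrite eval_X0_fmon rmorphM eval_X0_fmon => Ed0.
have : ('X^k : {poly CC}) %| 'X^d0 by apply/dvdpP; exists (eval_X0 h).
by rewrite dvdp_Pexp2l // size_polyX.
Qed.

Theorem lemma4p19 (p q m : nat) (d : int) (n c w : int) (d0 d1 dj : nat) :
  (0 < p)%N -> (p < q)%N -> coprime p q -> (0 < m)%N ->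
  (* lambda = (n,c,w) = mu(d0,d1,dj) lies in Lambda_(n,d) and f_lambda = fmon d0 d1 dj *)
  mu p%:Z q%:Z d0%:Z d1%:Z dj%:Z = (n, c, w) ->
  (c == d %[mod m%:Z])%Z ->
  (* (i) *)
  (forall wmin : int, is_omega_min p q n c wmin ->
     (in_principal_ideal (X0 ^+ (q - p)) (fmon d0 d1 dj) <-> wmin < w)) /\
  (* (ii) *)
  (forall a : nat, (0 < a)%N -> m = (a * (q - p))%N ->
   forall wmin c0 : int, is_omega_min p q n c wmin -> w = wmin ->
   is_c_min p q m n d c0 -> c0 < c ->
   in_principal_ideal (X1 ^+ (a * q) * Xj ^+ (a * p)) (fmon d0 d1 dj)).
Proof.
move=> _ lt_pq _ _ Ed c_d; split.
  move=> wmin wmin_min; rewrite fmon_X0_ideal.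
  exact: iff_sym (omega_min_lt_iff lt_pq Ed wmin_min).
move=> a a_gt0 m_eq wmin c0 wmin_min w_min.
move=> [[c0_d [w0 [e0 [e1 [ej Ee]]]]] _] lt_c0.
have lt_d0 : (d0 < q - p)%N.
  rewrite ltnNge; apply/negP => /(omega_min_lt_iff lt_pq Ed wmin_min).2.
  by rewrite w_min ltxx.
have gap : c0 + (a * (q - p))%N%:Z <= c.
  apply: eqz_mod_lt_add_le => //.
    by rewrite ltz_nat muln_gt0 a_gt0 subn_gt0.
  by rewrite -m_eq (eqP c_d) eq_sym.
have [le_d1 le_dj] := exponents_ge_of_c_gap lt_pq lt_d0 Ed Ee gap.
by rewrite -fmon_X1Xj; exact: fmon_ideal_le.
Qed.
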